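(* Let $v>71$ and let $(X,\mathcal{B})$ be an STS$(v)$ with $X=\{1,\dots,v\}$. Then there is a sequencing $\pi=[x_1\,x_2\,\cdots\,x_v]$ of $X$ that is $4$-good for $(X,\mathcal{B})$, i.e. for every $1\le i\le v-3$, the set $\{x_i,x_{i+1},x_{i+2},x_{i+3}\}$ contains no block of $\mathcal{B}$.
   Context: A Steiner triple system of order $v$, STS$(v)$, is a pair $(X,\mathcal{B})$ where $X$ is a set of $v$ points and $\mathcal{B}$ is a set of 3-subsets of $X$ (blocks) such that every pair of distinct points lies in exactly one block. A sequencing of $X$ is an ordering $[x_1\,x_2\,\cdots\,x_v]$ of all points of $X$, each appearing exactly once. For an integer $\ell$, a sequencing is $\ell$-good if no $\ell$ consecutive points of it contain a block of $\mathcal{B}$. *)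

From mathcomp Require Import all_boot.
Set Implicit Arguments. Unset Strict Implicit. Unset Printing Implicit Defensive.

(* Point set X = {1,...,v} is modelled by 'I_v (relabelling 0..v-1). *)
Definition is_STS (v : nat) (B : {set {set 'I_v}}) : Prop :=
  (forall b, b \in B -> #|b| = 3) /\
  (forall x y : 'I_v, x != y -> #|[set b in B | (x \in b) && (y \in b)]| = 1).

Definition is_sequencing (v : nat) (s : seq 'I_v) : Prop :=
  uniq s /\ size s = v.

Definition is_good (v l : nat) (B : {set {set 'I_v}}) (s : seq 'I_v) : Prop :=
  forall i, i + l <= size s ->
    forall b, b \in B -> ~~ (b \subset [set x in take l (drop i s)]).

From mathcomp Require Import all_boot zify.
Set Implicit Arguments. Unset Strict Implicit. Unset Printing Implicit Defensive.

(* Build the sequencing from right to left by prepending points.  A new point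
   only has to avoid the points already used and the (at most three) third
   points of the pairs among the next three points, so the greedy process gets
   stuck with at most three points left, all of them such third points.
   To make room for them, first fix the last nine points T, then place before
   T every third point of a pair at distance at most 2 in T, paying at most
   two padding points each.  After the greedy run, the at most three leftover
   points avoid T and all these third points, so they can be inserted into T
   right after its 3rd, 6th and 9th points. *)

Lemma take_drop_take (T : Type) n i m (s : seq T) :
  n + i <= m -> take n (drop i (take m s)) = take n (drop i s).
Proof. by move=> le_m; rewrite !take_drop take_takel. Qed.

Fixpoint spread (T : Type) (s L : seq T) : seq T :=
  if L is y :: L' then take 3 s ++ y :: spread (drop 3 s) L' else s.

Lemma take_spread (T : Type) (s L : seq T) :
  3 * size L <= size s -> take 3 (spread s L) = take 3 s.
Proof. by case: L => [|y L] //= le_Ls; rewrite take_size_cat // size_takel //; lia. Qed.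

Lemma perm_spread (T : eqType) (s L : seq T) : perm_eq (spread s L) (s ++ L).
Proof.
elim: L s => [|y L IHL] s /=; first by rewrite cats0.
rewrite -[in X in perm_eq _ X](cat_take_drop 3 s) -catA perm_cat2l.
by rewrite perm_sym -(cat1s y L) perm_catCA /= perm_cons perm_sym IHL.
Qed.

Section SteinerTripleSystem.

Variables (v : nat) (B : {set {set 'I_v}}).
Hypothesis STS_B : is_STS B.
Implicit Types (a c x y z : 'I_v) (s r w u l p q A L Z : seq 'I_v).

Definition blockfree (w : seq 'I_v) : bool :=
  [forall b in B, ~~ (b \subset [set x in w])].

Fixpoint good_seq (s : seq 'I_v) : bool :=
  if s is x :: s' then blockfree (x :: take 3 s') && good_seq s' else true.

(* The third point of the block through [a] and [c] (junk value [a] if [a = c]). *)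
Definition third (a c : 'I_v) : 'I_v :=
  odflt a [pick z | [exists b in B, [&& a \in b, c \in b, z \in b, z != a & z != c]]].

(* The third points of the pairs at distance at most 2 in [u]; a point
   outside [u ++ thirds u] completes no block with two points of a window of
   length 3 of [u]. *)
Fixpoint thirds (u : seq 'I_v) : seq 'I_v :=
  if u is a :: u' then [seq third a c | c <- take 2 u'] ++ thirds u' else [::].

Lemma card_block b : b \in B -> #|b| = 3.
Proof. by case: STS_B => card3 _ /card3. Qed.

Lemma block_unique a c b1 b2 : a != c -> b1 \in B -> b2 \in B ->
  a \in b1 -> c \in b1 -> a \in b2 -> c \in b2 -> b1 = b2.
Proof.
case: STS_B => _ pair1 ac b1B b2B a1 c1 a2 c2.
have /eqP/cards1P [b0 E] := pair1 _ _ ac.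
have : b1 \in [set b in B | (a \in b) && (c \in b)] by rewrite inE b1B a1 c1.
have : b2 \in [set b in B | (a \in b) && (c \in b)] by rewrite inE b2B a2 c2.
by rewrite E !inE => /eqP -> /eqP ->.
Qed.

Lemma block_third_unique b a c z t : b \in B -> a != c ->
  a \in b -> c \in b -> z \in b -> t \in b ->
  z != a -> z != c -> t != a -> t != c -> z = t.
Proof.
move=> bB ac ab cb zb tb za zc ta tc; apply/eqP; apply: contraTT isT => zt.
have : size [:: z; t; a; c] <= #|b|.
  rewrite -(card_uniqP _) /=; last by rewrite !inE !negb_or zt za zc ta tc ac.
  by apply/subset_leq_card/subsetP => x; rewrite !inE => /or4P [] /eqP ->.
by rewrite card_block.
Qed.

Lemma third_spec a c : a != c ->
  exists2 b, b \in B & [&& a \in b, c \in b, third a c \in b, third a c != a & third a c != c].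
Proof.
move=> ac; case: STS_B => _ pair1.
have /eqP/cards1P [b0 E] := pair1 _ _ ac.
have : b0 \in [set b in B | (a \in b) && (c \in b)] by rewrite E inE.
rewrite inE => /and3P [b0B ab0 cb0].
have /subsetPn [z zb0] : ~~ (b0 \subset [set a; c]).
  by apply/negP => /subset_leq_card; rewrite cards2 ac card_block.
rewrite !inE negb_or => /andP [za zc].
rewrite /third; case: pickP => [w /exists_inP [b bB wb] | none]; first by exists b.
by move: (none z) => /exists_inP []; exists b0; rewrite ?ab0 ?cb0 ?zb0 ?za.
Qed.

Lemma third_unique b a c z : b \in B -> a != c ->
  a \in b -> c \in b -> z \in b -> z != a -> z != c -> z = third a c.
Proof.
move=> bB ac ab cb zb za zc.
have [b' b'B /and5P [ab' cb' tb' ta tc]] := third_spec ac.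
have Eb := block_unique ac bB b'B ab cb ab' cb'; rewrite -Eb in tb'.
exact: block_third_unique bB ac ab cb zb tb' za zc ta tc.
Qed.

Lemma thirdC a c : a != c -> third a c = third c a.
Proof.
move=> ac; have [b bB /and5P [ab cb tb ta tc]] := third_spec ac.
by apply: third_unique bB _ cb ab tb tc ta; rewrite eq_sym.
Qed.

Lemma thirdKr a c : a != c -> third c (third a c) = a.
Proof.
move=> ac; have [b bB /and5P [ab cb tb ta tc]] := third_spec ac.
by apply/esym/(third_unique bB); rewrite // eq_sym.
Qed.

Lemma mem_thirds w a c : size w <= 3 -> a \in w -> c \in w -> a != c ->
  third a c \in thirds w.
Proof.
elim: w => [|x w IHw] //= le_w3; rewrite take_oversize // !inE mem_cat => /predU1P [-> | aw] /predU1P [-> | cw] ac.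
- by rewrite eqxx in ac.
- by rewrite map_f.
- by rewrite thirdC // map_f.
- by rewrite IHw ?orbT // ltnW.
Qed.

Lemma thirds_take n u : {subset thirds (take n u) <= thirds u}.
Proof.
elim: u n => [|a u IHu] [|n] //= x; rewrite !mem_cat => /orP [|/IHu ->]; last exact: orbT.
by rewrite -take_min minnC take_min => /mapP [c /mem_take c_u ->]; rewrite map_f.
Qed.

Lemma thirds_drop n u : {subset thirds (drop n u) <= thirds u}.
Proof.
elim: u n => [|a u IHu] [|n] //= x /IHu; rewrite mem_cat => ->; exact: orbT.
Qed.

Lemma size_thirds u : size (thirds u) <= 2 * size u.
Proof. by elim: u => [|a u IHu] //=; rewrite size_cat size_map size_take_min; lia. Qed.

Lemma size_thirds_take3 u : size (thirds (take 3 u)) <= 3.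
Proof. by case: u => [|a [|b [|c u]]] //=; rewrite !take0. Qed.

Lemma blockfree_sub w w' : {subset w' <= w} -> blockfree w -> blockfree w'.
Proof.
move=> sub /forall_inP bf; apply/forall_inP => b bB.
apply: contra (bf b bB) => /subset_trans; apply; apply/subsetP => x; rewrite !inE; exact: sub.
Qed.

Lemma blockfree_small w : size w < 3 -> blockfree w.
Proof.
move=> lt_w3; apply/forall_inP => b bB; apply/negP => /subset_leq_card.
by rewrite cardsE card_block //; apply/negP; rewrite -ltnNge (leq_ltn_trans (card_size w)).
Qed.

(* A block inside [y :: w] must contain [y] and two points of [w], so [y]
   is the third point of a pair of [w]. *)
Lemma blockfree_cons y w : size w <= 3 -> blockfree w ->
  y \notin w -> y \notin thirds w -> blockfree (y :: w).
Proof.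
move=> le_w3 /forall_inP bf yw yT; apply/forall_inP => b bB; apply/negP => sub_b.
have yb : y \in b.
  apply: contraTT (bf b bB) => yNb; rewrite negbK; apply/subsetP => x xb.
  by move: (subsetP sub_b x xb); rewrite !inE => /predU1P [xy | //]; rewrite -xy xb in yNb.
have /cards2P [a [c [ac Eb]]] : #|b :\ y| == 2.
  by move: (cardsD1 y b); rewrite (card_block bB) yb add1n => -[<-].
have /setD1P [ay ab] : a \in b :\ y by rewrite Eb !inE eqxx.
have /setD1P [cy cb] : c \in b :\ y by rewrite Eb !inE eqxx orbT.
have in_w x : x != y -> x \in b -> x \in w.
  by move=> xy /(subsetP sub_b); rewrite !inE (negbTE xy).
move: yT; rewrite (third_unique bB ac ab cb yb) 1?eq_sym //.
by rewrite mem_thirds ?in_w.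
Qed.

Lemma good_seq_catl s1 s2 : good_seq (s1 ++ s2) -> good_seq s1.
Proof.
elim: s1 => [|x s1 IHs] //= /andP [bf /IHs ->]; rewrite andbT.
apply: blockfree_sub bf => y; rewrite !inE => /predU1P [-> | ys]; first by rewrite eqxx.
by rewrite take_cat; case: ltnP => _; rewrite ?mem_cat ?(mem_take ys) ?ys orbT.
Qed.

Lemma good_seq_catr s1 s2 : good_seq (s1 ++ s2) -> good_seq s2.
Proof. by elim: s1 => [|x s1 IHs] //= /andP [_ /IHs]. Qed.

Lemma good_seq_cat s1 s2 : good_seq (s1 ++ take 3 s2) -> good_seq s2 -> good_seq (s1 ++ s2).
Proof.
have take3 s : take 3 (s ++ take 3 s2) = take 3 (s ++ s2).
  by rewrite !take_cat; case: ltnP => // _; rewrite take_takel //; lia.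
by elim: s1 => [|x s1 IHs] //= /andP [bf /IHs gs] /gs ->; rewrite -take3 bf.
Qed.

Lemma good_seq_window n i s : n <= 4 -> good_seq s -> blockfree (take n (drop i s)).
Proof.
move=> le_n4 gs; have := @good_seq_catr (take i s) (drop i s).
rewrite cat_take_drop => /(_ gs).
case: (drop i s) => [|x s'] /=; first by move=> _; apply: blockfree_small; case: n le_n4.
case: n le_n4 => [|n] le_n4 /andP [bf _]; first exact: blockfree_small.
change (blockfree (x :: take n s')); apply: blockfree_sub bf => y; rewrite !inE.
by case: eqP => // _; rewrite -(take_takel s' (_ : n <= 3)) //; apply: mem_take.
Qed.

Lemma good_seq_is_good s : good_seq s -> is_good 4 B s.
Proof. by move=> gs i _ b bB; exact: forall_inP (good_seq_window i (leqnn 4) gs) b bB. Qed.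

Lemma good_seq_cons y r : good_seq r -> y \notin r -> y \notin thirds (take 3 r) ->
  good_seq (y :: r).
Proof.
move=> gr yr yT; rewrite /= gr andbT blockfree_cons ?size_take_min ?geq_minl //.
- by move: (good_seq_window 0 (isT : 3 <= 4) gr); rewrite drop0.
- by apply: contra yr => /mem_take.
Qed.

Lemma blockfree_insert y w1 w2 : blockfree (y :: w1 ++ w2) -> blockfree (w1 ++ y :: w2).
Proof. by apply: blockfree_sub => x; rewrite !(mem_cat, inE); case: (x == y); rewrite ?orbT. Qed.

(* The four windows containing the inserted [y] are [y] together with a
   window of length 3 of [p ++ q], all of which lie inside [take 6 (p ++ q)]. *)
Lemma good_seq_insert l p q y : size p = 3 -> good_seq (l ++ p ++ q) ->
  y \notin take 6 (p ++ q) -> y \notin thirds (take 6 (p ++ q)) ->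
  good_seq (l ++ p ++ y :: q).
Proof.
move=> sp g yN yT; have gpq := good_seq_catr g.
have window i : i <= 3 -> blockfree (y :: take 3 (drop i (p ++ q))).
  move=> le_i3; have E : take 3 (drop i (take 6 (p ++ q))) = take 3 (drop i (p ++ q)).
    by apply: take_drop_take; lia.
  apply: blockfree_cons; rewrite ?size_take_min ?geq_minl //.
  - exact: good_seq_window.
  - by rewrite -E; apply: contra yN => /mem_take /mem_drop.
  - by rewrite -E; apply: contra yT => /thirds_take /thirds_drop.
apply: good_seq_cat; first by rewrite take_size_cat //; apply: (@good_seq_catl _ q); rewrite -catA.
case: p sp g yN yT gpq window => [|p1 [|p2 [|p3 []]]] // _ _ _ _ gpq window.
rewrite /= (good_seq_catr (s1 := [:: p1; p2; p3]) gpq) andbT.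
apply/and4P; split.
- exact: (blockfree_insert (w1 := [:: p1; p2; p3]) (window 0 isT)).
- exact: (blockfree_insert (w1 := [:: p2; p3]) (window 1 isT)).
- exact: (blockfree_insert (w1 := [:: p3]) (window 2 isT)).
- by move: (window 3 isT); rewrite /= drop0.
Qed.

Lemma good_seq_spread l T L : 3 * size L <= size T -> good_seq (l ++ T) ->
  {in L, forall y, (y \notin T) && (y \notin thirds T)} -> good_seq (l ++ spread T L).
Proof.
elim: L l T => [|y L IHL] l T //= le_LT gT avoid.
have /andP [yT ytT] := avoid y (mem_head _ _).
have le_3T : 3 <= size T by move: le_LT; rewrite mulnS; lia.
have take6 : take 6 (take 3 T ++ spread (drop 3 T) L) = take 6 T.
  rewrite (takeD 3 3) take_size_cat ?size_takel // drop_size_cat ?size_takel //.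
  by rewrite take_spread -?takeD // size_drop; move: le_LT; rewrite mulnS; lia.
apply: good_seq_insert; rewrite ?size_takel ?take6 //; first last.
- by apply: contra ytT => /thirds_take.
- by apply: contra yT => /mem_take.
rewrite catA; apply: IHL; rewrite -?catA ?cat_take_drop //.
  by rewrite size_drop leq_subRL // -mulnS.
move=> z zL; have /andP [zT ztT] := avoid z (mem_behead (s := y :: L) zL).
by rewrite (contra (@mem_drop _ _ _ _) zT) (contra (@thirds_drop _ _ _) ztT).
Qed.

Lemma exists_notin (A : seq 'I_v) : size A < v -> exists x, x \notin A.
Proof.
move=> lt_Av; case: (pickP [pred x | x \notin A]) => [x xA | all_in]; first by exists x.
suff : v <= size A by rewrite leqNgt lt_Av.
rewrite -{1}(card_ord v); apply: leq_trans (card_size A); apply: subset_leq_card.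
by apply/subsetP => x _; move: (all_in x) => /negbFE.
Qed.

Lemma size_uniq_ord (s : seq 'I_v) : uniq s -> size s <= v.
Proof. by move=> us; rewrite -(card_uniqP us) -[X in _ <= X]card_ord max_card. Qed.

Lemma good_seq_extend r A : good_seq r -> uniq r -> size r + 3 + size A < v ->
  exists2 x, x \notin A & good_seq (x :: r) && uniq (x :: r).
Proof.
move=> gr ur lt_v; have [x] : exists x, x \notin r ++ thirds (take 3 r) ++ A.
  by apply: exists_notin; rewrite !size_cat; have := size_thirds_take3 r; lia.
rewrite !mem_cat !negb_or => /and3P [xr xt xA]; exists x => //.
by rewrite good_seq_cons //= xr ur.
Qed.

Lemma exists_good_seq n : n + 3 < v -> exists2 r, size r = n & good_seq r && uniq r.
Proof.
elim: n => [|n IHn] lt_v; first by exists [::].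
have [r sr /andP [gr ur]] := IHn (ltnW lt_v).
have [x _ gux] : exists2 x, x \notin [::] & good_seq (x :: r) && uniq (x :: r).
  by apply: good_seq_extend; rewrite // sr addn0; lia.
by exists (x :: r); rewrite /= ?sr.
Qed.

(* Before prepending [z] to [a :: r], prepend two fresh points [f1], [f2]
   chosen so that [z] is not the third point of any pair among [f2; f1; a]. *)
Lemma good_seq_cover1 z r : good_seq r -> uniq r -> r != [::] -> size r + 7 < v ->
  exists l, [/\ size l <= 3, good_seq (l ++ r), uniq (l ++ r) & z \in l ++ r].
Proof.
case: r => [|a r] // gr ur _ lt_v.
have [zr | zNr] := boolP (z \in a :: r); first by exists [::].
have [f1 f1A /andP [g1 u1]] :
    exists2 f1, f1 \notin [:: third a z; z] & good_seq (f1 :: a :: r) && uniq (f1 :: a :: r).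
  by apply: good_seq_extend => //=; move: lt_v => /=; lia.
have [f2 f2A /andP [g2 u2]] : exists2 f2, f2 \notin [:: third a z; third f1 z; z] &
    good_seq [:: f2, f1, a & r] && uniq [:: f2, f1, a & r].
  by apply: good_seq_extend => //=; move: lt_v => /=; lia.
move: (u2) (u1) (f1A) f2A; rewrite /= !inE !negb_or => /andP [/and3P [f21 f2a _] _].
move=> /andP [/andP [f1a _] _] /andP [_ zf1] /and3P [f2az f21z zf2].
have zT : z \notin thirds (take 3 [:: f2, f1, a & r]).
  rewrite /= !take0 /= !inE; apply/negP => /or3P [] /eqP Ez.
  - by move: f21z; rewrite Ez thirdKr // => /eqP.
  - by move: f2az; rewrite Ez thirdKr // => /eqP.
  - by move: f1A; rewrite !inE Ez thirdKr // => /norP [/eqP].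
have zN : z \notin [:: f2, f1, a & r].
  by rewrite in_cons negb_or eq_sym zf2 in_cons negb_or eq_sym zf1.
exists [:: z; f2; f1]; split; rewrite ?mem_head //.
- exact: good_seq_cons.
- by rewrite cat_cons cons_uniq zN; exact: u2.
Qed.

Lemma good_seq_cover Z r : good_seq r -> uniq r -> r != [::] ->
  size r + 3 * size Z + 4 < v ->
  exists l, [/\ good_seq (l ++ r), uniq (l ++ r) & {subset Z <= l ++ r}].
Proof.
elim: Z r => [|z Z IHZ] r gr ur r0 lt_v; first by exists [::].
have lt7 : size r + 7 < v by move: lt_v => /=; lia.
have [l [sl gl ul zl]] := good_seq_cover1 z gr ur r0 lt7.
have lr0 : l ++ r != [::].
  by rewrite -size_eq0 size_cat addn_eq0 !size_eq0 (negbTE r0) andbF.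
have lt_lr : size (l ++ r) + 3 * size Z + 4 < v by rewrite size_cat; move: lt_v => /=; lia.
have [l' [gl' ul' Zl']] := IHZ (l ++ r) gl ul lr0 lt_lr.
exists (l' ++ l); rewrite -catA; split => // x; rewrite inE => /predU1P [-> | /Zl' //].
by rewrite mem_cat zl orbT.
Qed.

Lemma good_seq_saturate n r : v <= size r + n -> good_seq r -> uniq r ->
  exists l, [/\ good_seq (l ++ r), uniq (l ++ r) &
    forall x, x \notin l ++ r -> x \in thirds (take 3 (l ++ r))].
Proof.
elim: n r => [|n IHn] r le_v gr ur;
  case: (pickP [pred x | (x \notin r) && (x \notin thirds (take 3 r))]) => [x /andP [xr xt] | stuck];
  try by exists [::]; split => // x xr; move: (stuck x); rewrite /= xr => /negbFE.
all: have ux : uniq (x :: r) by rewrite /= xr ur.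
- by have := size_uniq_ord ux; rewrite /=; lia.
- have le_v' : v <= size (x :: r) + n by rewrite /=; lia.
  have [l [gl ul sl]] := IHn (x :: r) le_v' (good_seq_cons gr xr xt) ux.
  by exists (rcons l x); rewrite -cats1 -catA.
Qed.

Lemma is_sequencing_complete (r : seq 'I_v) : uniq r ->
  is_sequencing (r ++ [seq x <- enum 'I_v | x \notin r]).
Proof.
move=> ur; have U : uniq (r ++ [seq x <- enum 'I_v | x \notin r]).
  by rewrite cat_uniq ur filter_uniq ?enum_uniq //= andbT; apply/hasPn => x; rewrite mem_filter => /andP [].
split => //; rewrite -(card_uniqP U) -[RHS](card_ord v); apply: eq_card => x.
by rewrite mem_cat mem_filter mem_enum andbT orbN.
Qed.

Lemma exists_good_sequencing l T : 9 <= size T -> good_seq (l ++ T) -> uniq (l ++ T) ->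
  {subset thirds T <= l ++ T} -> exists2 s, is_sequencing s & good_seq s.
Proof.
move=> le9T gT uT covT.
have [l' [g' u' full']] := good_seq_saturate (leq_addl (size (l ++ T)) v) gT uT.
set r := l' ++ l ++ T in g' u' full'; set L : seq 'I_v := [seq x <- enum 'I_v | x \notin r].
have L_notin y : y \in L -> y \notin r by rewrite mem_filter => /andP [].
have size_L : size L <= 3.
  apply: leq_trans (size_thirds_take3 r); apply: uniq_leq_size => [|y /L_notin /full' //].
  exact/filter_uniq/enum_uniq.
exists ((l' ++ l) ++ spread T L).
  have P : perm_eq ((l' ++ l) ++ spread T L) (r ++ L).
    by rewrite -!catA !perm_cat2l perm_spread.
  by have [U S] := is_sequencing_complete u'; split; rewrite ?(perm_uniq P) ?(perm_size P).
apply: good_seq_spread; rewrite -?catA //; first by move: size_L le9T; lia.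
move=> y /L_notin yr; apply/andP; split.
  by apply: contra yr => yT; rewrite !mem_cat yT !orbT.
by apply: contra yr => /covT y2; rewrite mem_cat y2 orbT.
Qed.

End SteinerTripleSystem.

Theorem theorem3 (v : nat) (B : {set {set 'I_v}}) :
  71 < v -> is_STS B ->
  exists s : seq 'I_v, is_sequencing s /\ is_good 4 B s.
Proof.
move=> lt71v STS.
have [T sizeT /andP [gT uT]] : exists2 T, size T = 9 & good_seq B T && uniq T.
  by apply: exists_good_seq => //; lia.
have T0 : T != [::] by rewrite -size_eq0 sizeT.
have lt_cover : size T + 3 * size (thirds B T) + 4 < v.
  by have := size_thirds B T; rewrite sizeT; lia.
have [l [gl ul covT]] := good_seq_cover STS gT uT T0 lt_cover.
have [s seq_s gs] := exists_good_sequencing STS (eq_leq (esym sizeT)) gl ul covT.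
by exists s; split; last exact: good_seq_is_good.
Qed.
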